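(* Let $p\ge2$ and $q\ge2$, and let $\mathcal M_{\mathrm{reg}}$ and $\mathcal A_{\mathrm{class}}$ be as in the context. Then $\mathcal A_{\mathrm{class}}$ separates the points of $\mathcal M_{\mathrm{reg}}$: for any two distinct points of $\mathcal M_{\mathrm{reg}}$ there is a function in $\mathcal A_{\mathrm{class}}$ taking distinct values at them.
   Context: Let $\Gamma=\mathbb{R}^{2(p+q)}$ with coordinates $(\boldsymbol u,\boldsymbol p,\boldsymbol v,\boldsymbol\pi)$, $\boldsymbol u,\boldsymbol p\in\mathbb{R}^p$, $\boldsymbol v,\boldsymbol\pi\in\mathbb{R}^q$. Let $\bar\Gamma$ be the set where $H_1=\tfrac12(\boldsymbol p^2-\boldsymbol v^2)$, $H_2=\tfrac12(\boldsymbol\pi^2-\boldsymbol u^2)$ and $D=\boldsymbol u\cdot\boldsymbol p-\boldsymbol v\cdot\boldsymbol\pi$ all vanish. ${\mathrm{SL}}(2,\mathbb{R})$ acts on $\Gamma$ by $(\boldsymbol u,\boldsymbol p)^T\mapsto g(\boldsymbol u,\boldsymbol p)^T$, $(\boldsymbol\pi,\boldsymbol v)^T\mapsto g(\boldsymbol\pi,\boldsymbol v)^T$ (componentwise on the pairs $(u_i,p_i)$, $(\pi_j,v_j)$), preserving $\bar\Gamma$. Let $\bar\Gamma_{\mathrm{reg}}$ be the set of points of $\bar\Gamma$ at which both pairs $(\boldsymbol u,\boldsymbol p)$ and $(\boldsymbol v,\boldsymbol\pi)$ are linearly independent, and $\mathcal M_{\mathrm{reg}}=\bar\Gamma_{\mathrm{reg}}/{\mathrm{SL}}(2,\mathbb{R})$.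 For $x_k=(u_k,p_k)$ ($1\le k\le p$) and $x_{p+k}=(\pi_k,v_k)$ ($1\le k\le q$), set $\mathcal O_{kj}=x_k\times x_j$ (scalar cross product on $\mathbb{R}^2$); these are gauge invariant and $\mathcal A_{\mathrm{class}}$ is the algebra of functions on $\mathcal M_{\mathrm{reg}}$ generated by them. *)

From HB Require Import structures.
From mathcomp Require Import all_boot all_order all_algebra.
From mathcomp Require Import reals.
Set Implicit Arguments. Unset Strict Implicit. Unset Printing Implicit Defensive.
Import Order.TTheory GRing.Theory Num.Theory.
Local Open Scope ring_scope.

Record phase (R : realType) (p q : nat) := Phase {
  pu  : 'I_p -> R;
  pp  : 'I_p -> R;
  pv  : 'I_q -> R;
  ppi : 'I_q -> R }.

Section Defs.
Variables (R : realType) (p q : nat).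
Implicit Types (z : phase R p q).

Definition H1 z : R := 2^-1 * (\sum_(i < p) pp z i ^+ 2 - \sum_(j < q) pv z j ^+ 2).
Definition H2 z : R := 2^-1 * (\sum_(j < q) ppi z j ^+ 2 - \sum_(i < p) pu z i ^+ 2).
Definition Dc z : R := \sum_(i < p) pu z i * pp z i - \sum_(j < q) pv z j * ppi z j.

Definition in_Gbar z : Prop := H1 z = 0 /\ H2 z = 0 /\ Dc z = 0.

Definition lin_indep2 (n : nat) (a b : 'I_n -> R) : Prop :=
  forall s t : R, (forall i, s * a i + t * b i = 0) -> s = 0 /\ t = 0.

Definition in_Greg z : Prop :=
  in_Gbar z /\ lin_indep2 (pu z) (pp z) /\ lin_indep2 (pv z) (ppi z).

(* SL(2,R) action: (u_i,p_i)^T |-> g (u_i,p_i)^T, (pi_j,v_j)^T |-> g (pi_j,v_j)^T *)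
Definition sl2_act (g : 'M[R]_2) z : phase R p q :=
  Phase (fun i => g ord0 ord0 * pu z i + g ord0 ord_max * pp z i)
        (fun i => g ord_max ord0 * pu z i + g ord_max ord_max * pp z i)
        (fun j => g ord_max ord0 * ppi z j + g ord_max ord_max * pv z j)
        (fun j => g ord0 ord0 * ppi z j + g ord0 ord_max * pv z j).

(* z and z' represent the same point of M_reg = Gbar_reg / SL(2,R) *)
Definition gauge_equiv z z' : Prop :=
  exists g : 'M[R]_2, \det g = 1 /\
    (forall i, pu z' i = pu (sl2_act g z) i /\ pp z' i = pp (sl2_act g z) i) /\
    (forall j, pv z' j = pv (sl2_act g z) j /\ ppi z' j = ppi (sl2_act g z) j).

(* x_k = (u_k, p_k) for k < p, x_{p+k} = (pi_k, v_k) *)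
Definition xvec z (k : 'I_(p + q)) : R * R :=
  match split k with
  | inl i => (pu z i, pp z i)
  | inr j => (ppi z j, pv z j)
  end.

Definition cross2 (a b : R * R) : R := a.1 * b.2 - a.2 * b.1.

Definition Oinv (k j : 'I_(p + q)) z : R := cross2 (xvec z k) (xvec z j).

Inductive in_Aclass : (phase R p q -> R) -> Prop :=
  | Acl_gen k j : in_Aclass (Oinv k j)
  | Acl_const c : in_Aclass (fun _ => c)
  | Acl_add f g : in_Aclass f -> in_Aclass g -> in_Aclass (fun z => f z + g z)
  | Acl_mul f g : in_Aclass f -> in_Aclass g -> in_Aclass (fun z => f z * g z).

End Defs.

From HB Require Import structures.
From mathcomp Require Import all_boot all_order all_algebra.
From mathcomp Require Import reals.
From mathcomp Require Import ring.

Set Implicit Arguments.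
Unset Strict Implicit.
Unset Printing Implicit Defensive.
Import Order.TTheory GRing.Theory Num.Theory.
Local Open Scope ring_scope.

(* The invariants [O_kj] are the pairwise cross products of the plane vectors
   [x_1, ..., x_(p+q)], and [SL(2)] is the group of linear maps of the plane
   preserving the cross product.  If [x] and [y] have the same invariants,
   choose [x_i, x_j] with nonzero cross product (possible as soon as the pair
   [(u, p)] of [x] is independent).  The linear map [g] sending [x_i, x_j] to
   [y_i, y_j] has determinant [1] because [x_i × x_j = y_i × y_j], and every
   [y_k] is the unique vector whose cross products with [y_i, y_j] are those of
   [x_k] with [x_i, x_j], i.e. [y_k = g x_k]; hence [x] and [y] are gauge
   equivalent. *)

Section PlaneCross.
Variable R : realType.
Implicit Types (a b : R * R) (g : 'M[R]_2).

Definition mxapp2 g a : R * R :=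
  (g ord0 ord0 * a.1 + g ord0 ord_max * a.2,
   g ord_max ord0 * a.1 + g ord_max ord_max * a.2).

Definition mx2 (m00 m01 m10 m11 : R) : 'M[R]_2 :=
  \matrix_(r, s) if r == ord0 then (if s == ord0 then m00 else m01)
                 else (if s == ord0 then m10 else m11).

Lemma det_mx2_entries g :
  \det g = g ord0 ord0 * g ord_max ord_max - g ord0 ord_max * g ord_max ord0.
Proof.
rewrite (expand_det_row _ ord0) !big_ord_recl big_ord0 /cofactor !det_mx11.
rewrite /= !mxE /= expr0 expr1 addr0.
have -> : lift ord0 ord0 = ord_max :> 'I_2 by apply/val_inj.
have -> : lift ord_max ord0 = ord0 :> 'I_2 by apply/val_inj.
ring.
Qed.

Lemma det_mx2 m00 m01 m10 m11 : \det (mx2 m00 m01 m10 m11) = m00 * m11 - m01 * m10.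
Proof. by rewrite det_mx2_entries !mxE. Qed.

Lemma cross2_mxapp2 g a b :
  cross2 (mxapp2 g a) (mxapp2 g b) = \det g * cross2 a b.
Proof. rewrite det_mx2_entries /cross2 /=; ring. Qed.

Lemma cross2_basis_inj (e0 e1 : R * R) a b : cross2 e0 e1 != 0 ->
  cross2 a e0 = cross2 b e0 -> cross2 a e1 = cross2 b e1 -> a = b.
Proof.
case: a b => [a1 a2] [b1 b2] nz_e eq0 eq1.
(* Cramer's rule for [v × e0 = v × e1 = 0], with [v = a - b]. *)
have coord1 : (a1 - b1) * cross2 e0 e1 =
    e0.1 * (cross2 (a1, a2) e1 - cross2 (b1, b2) e1)
    - e1.1 * (cross2 (a1, a2) e0 - cross2 (b1, b2) e0).
  by rewrite /cross2 /=; ring.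
have coord2 : (a2 - b2) * cross2 e0 e1 =
    e0.2 * (cross2 (a1, a2) e1 - cross2 (b1, b2) e1)
    - e1.2 * (cross2 (a1, a2) e0 - cross2 (b1, b2) e0).
  by rewrite /cross2 /=; ring.
rewrite eq0 eq1 !subrr !mulr0 subrr in coord1 coord2.
move/eqP: coord1; move/eqP: coord2; rewrite !mulf_eq0 (negPf nz_e) !orbF !subr_eq0.
by move=> /eqP -> /eqP ->.
Qed.

Lemma sl2_map_basis (e0 e1 f0 f1 : R * R) : cross2 e0 e1 != 0 ->
  cross2 f0 f1 = cross2 e0 e1 ->
  exists2 g, \det g = 1 & mxapp2 g e0 = f0 /\ mxapp2 g e1 = f1.
Proof.
(* [g = F E^-1], where [E] and [F] have columns [e0, e1] and [f0, f1]. *)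
move=> nz_D eq_D; set D := cross2 e0 e1 in nz_D eq_D *.
exists (mx2 ((f0.1 * e1.2 - f1.1 * e0.2) / D) ((f1.1 * e0.1 - f0.1 * e1.1) / D)
            ((f0.2 * e1.2 - f1.2 * e0.2) / D) ((f1.2 * e0.1 - f0.2 * e1.1) / D)).
  rewrite det_mx2; apply: (mulIf nz_D); rewrite mul1r -[in RHS]eq_D.
  by rewrite /D /cross2 in nz_D *; field.
case: f0 f1 {eq_D} => [f01 f02] [f11 f12].
by rewrite /mxapp2 !mxE /=; split; congr pair; rewrite /D /cross2 in nz_D *; field.
Qed.

Lemma sl2_of_cross2 (I : Type) (a b : I -> R * R) (i j : I) :
  cross2 (a i) (a j) != 0 ->
  (forall k l, cross2 (b k) (b l) = cross2 (a k) (a l)) ->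
  exists2 g, \det g = 1 & forall k, b k = mxapp2 g (a k).
Proof.
move=> nz_a eq_b.
have [g det_g [gi gj]] := sl2_map_basis nz_a (eq_b i j).
exists g => // k.
have nz_b : cross2 (b i) (b j) != 0 by rewrite eq_b.
apply: (cross2_basis_inj nz_b).
  by rewrite eq_b -gi cross2_mxapp2 det_g mul1r.
by rewrite eq_b -gj cross2_mxapp2 det_g mul1r.
Qed.

End PlaneCross.

Lemma lin_indep2_cross2 (R : realType) n (a b : 'I_n -> R) :
  lin_indep2 a b -> exists i j, cross2 (a i, b i) (a j, b j) != 0.
Proof.
move=> indep.
case: (boolP [exists i, exists j, cross2 (a i, b i) (a j, b j) != 0]).
  by case/existsP=> i /existsP[j nz]; exists i, j.
rewrite negb_exists => /forallP degenerate.
have cross0 i j : cross2 (a i, b i) (a j, b j) = 0.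
  by move: (degenerate i); rewrite negb_exists => /forallP/(_ j); rewrite negbK => /eqP.
exfalso; case: (boolP [exists i, a i != 0]) => [/existsP[i nz_ai] | ].
  have relation k : b i * a k + - a i * b k = 0.
    by rewrite -oppr0 -(cross0 i k) /cross2 /=; ring.
  by have [_ /eqP] := indep _ _ relation; rewrite oppr_eq0 (negPf nz_ai).
rewrite negb_exists => /forallP a0.
have relation k : 1 * a k + 0 * b k = 0.
  by move: (a0 k); rewrite negbK => /eqP ->; ring.
by have [/eqP] := indep _ _ relation; rewrite oner_eq0.
Qed.

Section GaugeInvariants.
Variables (R : realType) (p q : nat).
Implicit Types (x y z : phase R p q) (g : 'M[R]_2).

Lemma xvec_lshift z i : xvec z (lshift q i) = (pu z i, pp z i).
Proof. by rewrite /xvec (unsplitK (inl i : 'I_p + 'I_q)). Qed.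

Lemma xvec_rshift z j : xvec z (rshift p j) = (ppi z j, pv z j).
Proof. by rewrite /xvec (unsplitK (inr j : 'I_p + 'I_q)). Qed.

Lemma xvec_sl2_act g z k : xvec (sl2_act g z) k = mxapp2 g (xvec z k).
Proof. by rewrite /xvec; case: (split k). Qed.

Lemma gauge_equiv_of_xvec g x y : \det g = 1 ->
  (forall k, xvec y k = mxapp2 g (xvec x k)) -> gauge_equiv x y.
Proof.
move=> det_g act; exists g; split=> //; split=> [i | j].
  by move: (act (lshift q i)); rewrite -xvec_sl2_act !xvec_lshift => -[-> ->].
by move: (act (rshift p j)); rewrite -xvec_sl2_act !xvec_rshift => -[-> ->].
Qed.

End GaugeInvariants.

Theorem mainTheorem5 (R : realType) (p q : nat) :
  (2 <= p)%N -> (2 <= q)%N ->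
  forall x y : phase R p q,
    in_Greg x -> in_Greg y -> ~ gauge_equiv x y ->
    exists f : phase R p q -> R, in_Aclass f /\ f x <> f y.
Proof.
move=> _ _ x y [_ [indep_x _]] _ not_equiv.
case: (boolP [exists k, exists l, Oinv k l x != Oinv k l y]).
  case/existsP=> k /existsP[l neq_O].
  by exists (Oinv k l); split; [exact: Acl_gen | exact/eqP].
rewrite negb_exists => /forallP same_O; exfalso; apply: not_equiv.
have eq_O k l : cross2 (xvec y k) (xvec y l) = cross2 (xvec x k) (xvec x l).
  by move: (same_O k); rewrite negb_exists => /forallP/(_ l); rewrite negbK => /eqP.
have [i [j nz]] := lin_indep2_cross2 indep_x.
rewrite -!xvec_lshift in nz.
have [g det_g act] := sl2_of_cross2 nz eq_O.
exact: gauge_equiv_of_xvec det_g act.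
Qed.
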